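(* Let $M(n)$ denote the maximum of $\sigma_2(G)$ over all connected graphs $G$ with $n$ vertices. Then $M(n)=\frac{n^4}{32}+O(n^3)$ as $n\to\infty$.
   Context: All graphs are finite, simple, undirected. For a connected graph $G$ and $u\in V(G)$, the eccentricity $\varepsilon_G(u)=\max_{v\in V(G)} d_G(u,v)$, where $d_G$ is the shortest-path distance. The second Zagreb eccentricity index is $\sigma_2(G)=\sum_{uv\in E(G)}\varepsilon_G(u)\varepsilon_G(v)$. *)

From mathcomp Require Import all_boot all_order all_algebra.
Set Implicit Arguments. Unset Strict Implicit. Unset Printing Implicit Defensive.
Import Order.TTheory GRing.Theory Num.Theory.

Section Graphs.
Variable n : nat.
Implicit Types (E : {set 'I_n * 'I_n}) (u v : 'I_n).

Definition adj E : rel 'I_n := fun u v => (u, v) \in E.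

Definition simpleb E : bool :=
  [forall u, (u, u) \notin E] &&
  [forall u, forall v, ((u, v) \in E) == ((v, u) \in E)].

Definition connectedb E : bool :=
  [forall u, forall v, connect (adj E) u v].

Fixpoint walk E (k : nat) u v : bool :=
  match k with
  | 0 => u == v
  | k'.+1 => [exists w, adj E u w && walk E k' w v]
  end.

(* shortest-path distance: least k with a walk of length k
   (for connected graphs such k exists and is < n) *)
Definition dist E u v : nat := find (fun k => walk E k u v) (iota 0 n).

Definition ecc E u : nat := \max_(v : 'I_n) dist E u v.

Definition sigma2 E : nat :=
  \sum_(u : 'I_n) \sum_(v : 'I_n | (u < v)%N && adj E u v) ecc E u * ecc E v.

End Graphs.

Definition M (n : nat) : nat :=
  \max_(E : {set 'I_n * 'I_n} | simpleb E && connectedb E) sigma2 E.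

From mathcomp Require Import all_boot all_order all_algebra zify ring lra.
Set Implicit Arguments. Unset Strict Implicit. Unset Printing Implicit Defensive.

(* Upper bound.  Let D be the largest eccentricity of a connected simple graph G
   and x a vertex with ecc(x) = D.  Choosing one vertex at each distance
   0, ..., D from x gives a "spine" P of D + 1 vertices; by the triangle
   inequality any vertex is adjacent to at most 3 spine vertices.  Hence the
   number A of oriented edges is at most q^2 + 3q + 3n with q = n - D - 1, and
   2 sigma2(G) <= A D^2.  Since D (q + 1) <= n^2 / 4 (AM-GM), this gives the bound.

   Lower bound.  The "path-clique" on {0, ..., n-1} joins consecutive vertices
   and all pairs of vertices >= b.  Clique vertices have eccentricity >= b
   (their distance to 0), so 2 sigma2 >= (n-b)(n-b-1) b^2, which for
   b = floor(n/2) is at least (n^4 - 4 n^3) / 16. *)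

Local Open Scope nat_scope.

Section Walks.
Variables (n : nat) (E : {set 'I_n * 'I_n}).

Lemma walk_cat a b u w v : walk E a u w -> walk E b w v -> walk E (a + b) u v.
Proof.
elim: a u => [|a IH] u /=; first by move/eqP->.
case/existsP=> z /andP[Euz Wzw] Wwv; apply/existsP; exists z.
by rewrite Euz (IH _ Wzw Wwv).
Qed.

Lemma walk_split a b u v :
  walk E (a + b) u v -> exists2 w, walk E a u w & walk E b w v.
Proof.
elim: a u => [|a IH] u /=; first by exists u.
case/existsP=> z /andP[Euz Wzv]; have [w Wzw Wwv] := IH _ Wzv.
by exists w => //; apply/existsP; exists z; rewrite Euz.
Qed.

Lemma walk1 u v : adj E u v -> walk E 1 u v.
Proof. by move=> Euv; apply/existsP; exists v; rewrite Euv eqxx. Qed.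

Lemma path_walk u p : path (adj E) u p -> walk E (size p) u (last u p).
Proof.
elim: p u => [|z p IH] u /=; first by rewrite eqxx.
by case/andP=> Euz Pz; apply/existsP; exists z; rewrite Euz IH.
Qed.

Lemma dist_min k u v : walk E k u v -> dist E u v <= k.
Proof.
move=> Wk; rewrite /dist; case: (ltnP k n) => [k_lt_n | n_le_k].
  by rewrite leqNgt; apply/negP => /(before_find 0); rewrite nth_iota // Wk.
by apply: leq_trans (find_size _ _) _; rewrite size_iota.
Qed.

Lemma dist_walk u v : dist E u v < n -> walk E (dist E u v) u v.
Proof.
rewrite /dist => lt_n; have has_walk : has (fun k => walk E k u v) (iota 0 n).
  by rewrite has_find size_iota.
by have := nth_find 0 has_walk; rewrite nth_iota.
Qed.

(* Connected vertices are joined by a duplicate-free path, hence dist < n. *)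
Lemma connect_dist u v : connect (adj E) u v -> dist E u v < n.
Proof.
case/connectP=> p Pp ->; case: (shortenP Pp) => q Pq uniq_q _.
apply: leq_ltn_trans (dist_min (path_walk Pq)) _.
by have := max_card (mem (u :: q)); rewrite card_ord (card_uniqP uniq_q).
Qed.

End Walks.

Section ConnectedGraph.
Variables (n : nat) (E : {set 'I_n * 'I_n}).
Hypothesis connectedE : connectedb E.

Lemma dist_lt u v : dist E u v < n.
Proof. by apply: connect_dist; move/forallP: connectedE => /(_ u)/forallP/(_ v). Qed.

Lemma dist_edge x u v : adj E u v -> dist E x v <= (dist E x u).+1.
Proof.
move=> Euv; rewrite -addn1; apply: dist_min.
exact: walk_cat (dist_walk (dist_lt x u)) (walk1 Euv).
Qed.

Lemma ecc_lt u : ecc E u < n.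
Proof.
have n_pos : 0 < n by apply: leq_ltn_trans (ltn_ord u).
apply: (@leq_ltn_trans n.-1); last by rewrite prednK.
by apply/bigmax_leqP => v _; rewrite -ltnS prednK ?dist_lt.
Qed.

(* Every distance 0, ..., ecc x from x is attained: cut a longest geodesic. *)
Lemma dist_levels x k : k <= ecc E x -> exists w, dist E x w = k.
Proof.
have n_pos : 0 < #|'I_n| by rewrite card_ord; apply: leq_ltn_trans (ltn_ord x).
rewrite /ecc; have [y ->] := eq_bigmax (dist E x) n_pos.
move=> k_le; have := dist_walk (dist_lt x y).
rewrite -(subnKC k_le) => /walk_split[w Wxw Wwy]; exists w.
apply/eqP; rewrite eqn_leq (dist_min Wxw) leqNgt; apply/negP => lt_k.
have shortcut := dist_min (walk_cat (dist_walk (dist_lt x w)) Wwy).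
have : dist E x w + (dist E x y - k) < dist E x y.
  by rewrite -[X in _ < X](subnKC k_le) ltn_add2r.
by rewrite ltnNge shortcut.
Qed.

End ConnectedGraph.

Section SimpleGraph.
Variables (n : nat) (E : {set 'I_n * 'I_n}).
Hypothesis simpleE : simpleb E.

Lemma adj_sym : symmetric (adj E).
Proof. by move=> u v; case/andP: simpleE => _ /forallP/(_ u)/forallP/(_ v)/eqP. Qed.

Lemma adj_irr u : ~~ adj E u u.
Proof. by case/andP: simpleE => /forallP/(_ u). Qed.

Definition adj_pairs : nat := \sum_u \sum_v (adj E u v : nat).

Lemma twice_sigma2_le D :
  (forall u, ecc E u <= D) -> 2 * sigma2 E <= adj_pairs * (D * D).
Proof.
move=> ecc_le_D.
pose oriented (u v : 'I_n) := ((u < v) && adj E u v : nat).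
have oriented_sum : \sum_u \sum_v oriented u v + \sum_u \sum_v oriented v u = adj_pairs.
  rewrite -big_split; apply: eq_bigr => u _; rewrite -big_split; apply: eq_bigr => v _.
  rewrite /oriented (adj_sym v u); case: (ltngtP u v) => [||/val_inj->] //=.
  - by rewrite addn0.
  - by rewrite (negbTE (adj_irr v)).
have sigma2_le : sigma2 E <= (\sum_u \sum_v oriented u v) * (D * D).
  rewrite /sigma2 big_distrl; apply: leq_sum => u _.
  rewrite big_distrl big_mkcond; apply: leq_sum => v _ /=.
  by rewrite /oriented; case: (_ && _); rewrite ?mul1n ?leq_mul.
rewrite -oriented_sum mulnDl mul2n -addnn leq_add // exchange_big.
exact: sigma2_le.
Qed.

End SimpleGraph.

Lemma sum_ord_mem m (s : seq nat) : \sum_(k < m) (val k \in s : nat) <= size s.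
Proof.
rewrite -big_mkcond /= sum1dep_card cardE -(size_map val).
apply: uniq_leq_size; first by rewrite map_inj_uniq ?enum_uniq //; apply: val_inj.
by move=> i /mapP[k]; rewrite mem_enum inE => k_in ->.
Qed.

Section Spine.
Variables (n : nat) (E : {set 'I_n * 'I_n}).
Hypotheses (simpleE : simpleb E) (connectedE : connectedb E).

Definition level_rep x k : 'I_n := odflt x [pick w | dist E x w == k].

Lemma dist_level_rep x k : k <= ecc E x -> dist E x (level_rep x k) = k.
Proof.
rewrite /level_rep; case: pickP => [w /eqP // | none] /(dist_levels connectedE)[w dist_w].
by have := none w; rewrite dist_w eqxx.
Qed.

Definition spine x : {set 'I_n} := [set level_rep x k | k : 'I_(ecc E x).+1].

Lemma level_rep_inj x : injective (fun k : 'I_(ecc E x).+1 => level_rep x k).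
Proof.
move=> k l /(congr1 (dist E x)).
by rewrite (dist_level_rep (ltn_ord k)) (dist_level_rep (ltn_ord l)) => /val_inj.
Qed.

Lemma card_spine x : #|spine x| = (ecc E x).+1.
Proof. by rewrite card_imset ?cardsT ?card_ord //; apply: level_rep_inj. Qed.

(* A vertex at distance d from x can only be adjacent to spine vertices at
   levels d - 1, d, d + 1. *)
Lemma spine_adj x u : \sum_(v in spine x) (adj E u v : nat) <= 3.
Proof.
rewrite big_imset /=; last by move=> k l _ _; apply: level_rep_inj.
set d := dist E x u.
apply: leq_trans (sum_ord_mem _ [:: d.-1; d; d.+1]).
rewrite (eq_bigl xpredT) => [|k]; last by rewrite inE.
apply: leq_sum => k _; case Euk: (adj E u _) => //.
have := dist_edge connectedE x Euk.
rewrite adj_sym // in Euk; have := dist_edge connectedE x Euk.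
rewrite (dist_level_rep (ltn_ord k)) -/d !inE.
by rewrite /= lt0b; move: (nat_of_ord k) d => i e; lia.
Qed.

End Spine.

(* Edge counting for a symmetric relation when every vertex has at most c
   neighbours in P: only the pairs inside the complement of P are unrestricted. *)
Lemma pair_count_split (T : finType) (r : rel T) (P : {set T}) c :
  symmetric r -> (forall u, \sum_(v in P) (r u v : nat) <= c) ->
  \sum_u \sum_v (r u v : nat) <= #|~: P| * #|~: P| + c * #|~: P| + c * #|T|.
Proof.
move=> r_sym few_in_P.
have split_P (F : T -> nat) : \sum_v F v = \sum_(v in P) F v + \sum_(v in ~: P) F v.
  by rewrite (bigID (mem P)) /=; congr (_ + _); apply: eq_bigl => v; rewrite in_setC.
have into_P : \sum_u \sum_(v in P) (r u v : nat) <= c * #|T|.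
  apply: (@leq_trans (\sum_(u : T) c)); first exact: leq_sum.
  by rewrite sum_nat_const mulnC.
have P_to_Q : \sum_(u in P) \sum_(v in ~: P) (r u v : nat) <= c * #|~: P|.
  rewrite exchange_big /=; apply: leq_trans (_ : _ <= \sum_(v in ~: P) c) _.
    apply: leq_sum => v _; rewrite (eq_bigr _ (fun u _ => congr1 nat_of_bool (r_sym u v))).
    exact: few_in_P.
  by rewrite sum_nat_const mulnC.
have Q_to_Q : \sum_(u in ~: P) \sum_(v in ~: P) (r u v : nat) <= #|~: P| * #|~: P|.
  rewrite -sum_nat_const leq_sum // => u _.
  by rewrite -sum1_card leq_sum // => v _; case: (r u v).
rewrite (eq_bigr _ (fun u _ => split_P _)) big_split /= [X in _ + X <= _]split_P.
apply: leq_trans (leq_add into_P (leq_add P_to_Q Q_to_Q)) _.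
by rewrite addnC (addnC (c * #|~: P|)).
Qed.

(* The arithmetic of the upper bound: with p = n - D, D p <= n^2/4 by AM-GM. *)
Lemma upper_arith n D A s : D < n -> 2 * s <= A * (D * D) ->
  A <= (n - D.+1) * (n - D.+1) + 3 * (n - D.+1) + 3 * n -> 32 * s <= n ^ 4 + 64 * n ^ 3.
Proof.
move=> lt_Dn sigma_le A_le; set p := n - D.
have def_n : n = D + p by rewrite subnKC // ltnW.
have {}A_le : A <= p * p + 4 * n by lia.
have agm : 16 * ((D * p) * (D * p)) <= n ^ 4.
  have agm2 := (nat_AGM2 D p).1; rewrite -def_n in agm2.
  have -> : n ^ 4 = n ^ 2 * n ^ 2 by rewrite -expnD.
  by apply: leq_trans (leq_mul agm2 agm2); rewrite eq_leq //; ring.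
have cube : n * (D * D) <= n ^ 3 by rewrite expnS leq_mul // mulnn leq_sqr ltnW.
have A_D2 : A * (D * D) <= (D * p) * (D * p) + 4 * (n * (D * D)).
  by apply: leq_trans (leq_mul A_le (leqnn _)) _; rewrite eq_leq //; ring.
move: sigma_le A_D2 agm cube.
move: (A * (D * D)) ((D * p) * (D * p)) (n * (D * D)) (n ^ 4) (n ^ 3) => a b c d e; lia.
Qed.

(* Upper bound: take x of maximal eccentricity D and count edges via its spine. *)
Lemma sigma2_upper n (E : {set 'I_n * 'I_n}) :
  simpleb E -> connectedb E -> 32 * sigma2 E <= n ^ 4 + 64 * n ^ 3.
Proof.
move=> simpleE connectedE.
have [n0 | n_pos] := posnP n.
  by rewrite /sigma2 big1 // => u; have := ltn_ord u; rewrite [X in _ < X]n0.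
have [x ecc_max] : {x | \max_u ecc E u = ecc E x}.
  by apply: eq_bigmax; rewrite card_ord.
have ecc_le u : ecc E u <= ecc E x by rewrite -ecc_max leq_bigmax.
apply: (upper_arith (ecc_lt connectedE x) (twice_sigma2_le simpleE ecc_le)).
have := pair_count_split (adj_sym simpleE) (spine_adj simpleE connectedE x).
by rewrite [#|~: _|]cardsCs setCK (card_spine connectedE) !(card_ord n).
Qed.

Lemma sum_ltn_ltn n (u v : 'I_n) : (u < v) + (v < u) = (u != v).
Proof. by rewrite -val_eqE; case: ltngtP. Qed.

Lemma ordered_pairs n (S : {set 'I_n}) :
  2 * \sum_(u in S) \sum_(v in S) (u < v : nat) = #|S| * #|S|.-1.
Proof.
rewrite mul2n -addnn {2}exchange_big -big_split /= -sum_nat_const.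
apply: eq_bigr => u u_in_S; rewrite -big_split /=.
rewrite (eq_bigr (fun v => (u != v : nat))) => [|v _]; last exact: sum_ltn_ltn.
rewrite (cardD1 u) u_in_S (bigD1 u) //= eqxx add0n -sum1_card.
apply: eq_big => [v | v /andP[_ v_neq_u]]; first by rewrite !inE andbC.
by rewrite eq_sym v_neq_u.
Qed.

Lemma sigma2_clique_lower n (E : {set 'I_n * 'I_n}) (S : {set 'I_n}) e :
  {in S &, forall u v, u != v -> adj E u v} -> {in S, forall u, e <= ecc E u} ->
  #|S| * #|S|.-1 * (e * e) <= 2 * sigma2 E.
Proof.
move=> clique ecc_ge; rewrite -ordered_pairs -mulnA leq_mul2l /=.
rewrite big_distrl /sigma2 (big_mkcond (mem S)) leq_sum // => u _ /=.
case: ifP => [u_in_S | _]; last exact: leq0n.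
rewrite big_distrl (big_mkcond (mem S)) [X in _ <= X]big_mkcond leq_sum // => v _ /=.
case: ifP => [v_in_S | _]; last exact: leq0n.
case: ltnP => [lt_uv | _]; last by rewrite mul0n.
have neq_uv : u != v by rewrite -val_eqE neq_ltn lt_uv.
by rewrite clique //= mul1n leq_mul ?ecc_ge.
Qed.

(* The extremal graph on {0, ..., N-1}: a path 0 - 1 - ... - b followed by
   a clique on the vertices >= b. *)
Section PathClique.
Variables (m b : nat).
Local Notation N := m.+1.

Definition path_clique : {set 'I_N * 'I_N} :=
  [set p : 'I_N * 'I_N | (p.1 != p.2) &&
           [|| (b <= p.1) && (b <= p.2), p.1.+1 == p.2 | p.2.+1 == p.1]].

Lemma adj_path_clique u v : adj path_clique u v =
  (u != v) && [|| (b <= u) && (b <= v), u.+1 == v | v.+1 == u].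
Proof. by rewrite /adj inE. Qed.

Lemma path_clique_simple : simpleb path_clique.
Proof.
apply/andP; split; apply/forallP => u; first by rewrite -/(adj _ u u) adj_path_clique eqxx.
apply/forallP => v; rewrite -/(adj _ u v) -/(adj _ v u) !adj_path_clique.
by apply/eqP; rewrite [v == u]eq_sym [(b <= v) && _]andbC [(v.+1 == u) || _]orbC.
Qed.

Lemma connect_path_clique_ord0 k :
  k < N -> connect (adj path_clique) (inord k) ord0.
Proof.
elim: k => [|k IH] lt_kN.
  by rewrite (_ : inord 0 = ord0) ?connect0 //; apply: val_inj; rewrite /= inordK.
apply: connect_trans (IH (ltnW lt_kN)); apply: connect1.
rewrite adj_path_clique -(inj_eq val_inj) /= !inordK ?(ltnW lt_kN) //.
by rewrite eqxx !orbT (gtn_eqF (ltnSn k)).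
Qed.

Lemma path_clique_connected : connectedb path_clique.
Proof.
have csym := sym_connect_sym (adj_sym path_clique_simple).
apply/forallP => u; apply/forallP => v; apply: (@connect_trans _ _ ord0).
  by have := connect_path_clique_ord0 (ltn_ord u); rewrite inord_val.
by rewrite csym; have := connect_path_clique_ord0 (ltn_ord v); rewrite inord_val.
Qed.

(* Along an edge, min(vertex, b) changes by at most one. *)
Lemma walk_path_clique k u v : walk path_clique k u v -> minn u b <= minn v b + k.
Proof.
elim: k u => [|k IH] u /=; first by move/eqP->; rewrite addn0.
case/existsP=> w /andP[]; rewrite adj_path_clique => /andP[_ Euw] /IH; lia.
Qed.

(* Clique vertices are at distance >= b from vertex 0. *)
Lemma ecc_path_clique (u : 'I_N) : b <= u -> b <= ecc path_clique u.
Proof.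
move=> le_bu; apply: leq_trans (leq_bigmax ord0).
have := walk_path_clique (dist_walk (dist_lt path_clique_connected u ord0)).
by rewrite (minn_idPr le_bu) /= min0n.
Qed.

Lemma sigma2_path_clique : (N - b) * (N - b).-1 * (b * b) <= 2 * sigma2 path_clique.
Proof.
have card_clique : #|[set u : 'I_N | b <= u]| = N - b.
  rewrite -sum1dep_card (eq_bigl (fun i : 'I_N => xpredT i && (b <= i))) //.
  by rewrite -(big_geq_mkord b N xpredT (fun=> 1)) sum_nat_const_nat muln1.
rewrite -card_clique; apply: sigma2_clique_lower => [u v | u]; rewrite !inE.
  by move=> le_bu le_bv neq_uv; rewrite adj_path_clique neq_uv le_bu le_bv.
exact: ecc_path_clique.
Qed.

End PathClique.

Lemma lower_arith N :
  N ^ 4 <= 16 * ((N - N./2) * (N - N./2).-1 * (N./2 * N./2)) + 4 * N ^ 3.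
Proof.
rewrite -[in X in X <= _](odd_double_half N) -[in 4 * _](odd_double_half N).
have -> : N - N./2 = odd N + N./2 by rewrite -[in LHS](odd_double_half N) -addnn; lia.
case: (odd N); case: N./2 => [|b] //=; rewrite -!mul2n; nia.
Qed.

Lemma M_upper n : 32 * M n <= n ^ 4 + 64 * n ^ 3.
Proof.
apply: (big_ind (fun s => 32 * s <= n ^ 4 + 64 * n ^ 3)) => [|s t s_le t_le | E /andP[]].
- by rewrite muln0.
- by rewrite maxnMr geq_max s_le t_le.
- exact: sigma2_upper.
Qed.

Lemma M_lower n : n ^ 4 <= 32 * M n + 4 * n ^ 3.
Proof.
case: n => [|m]; first by rewrite exp0n.
have M_ge : sigma2 (path_clique m m.+1./2) <= M m.+1.
  apply: leq_bigmax_cond.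
  by rewrite (path_clique_simple m m.+1./2) (path_clique_connected m m.+1./2).
have lower := leq_trans (sigma2_path_clique m m.+1./2) (leq_mul (leqnn 2) M_ge).
apply: leq_trans (lower_arith m.+1) _; rewrite leq_add2r.
by apply: leq_trans (leq_mul (leqnn 16) lower) _; rewrite mulnA.
Qed.

Import Order.TTheory GRing.Theory Num.Theory.
Local Open Scope ring_scope.

Theorem corollary2p12 :
  exists (C : rat) (N : nat), forall n : nat, (N <= n)%N ->
    `| (M n)%:R - (n%:R) ^+ 4 / 32 | <= C * (n%:R) ^+ 3.
Proof.
exists 2%:R, 0%N => n _.
have upper : 32%:R * (M n)%:R <= n%:R ^+ 4 + 64%:R * n%:R ^+ 3 :> rat.
  by rewrite -!natrX -!natrM -natrD ler_nat M_upper.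
have lower : n%:R ^+ 4 <= 32%:R * (M n)%:R + 4%:R * n%:R ^+ 3 :> rat.
  by rewrite -!natrX -!natrM -natrD ler_nat M_lower.
have cube_ge0 : 0 <= n%:R ^+ 3 :> rat by rewrite exprn_ge0 ?ler0n.
by rewrite ler_norml; apply/andP; split; lra.
Qed.
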